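(* Let $h\ge2$, $L\in\mathbb{N}$, $\beta>0$, $\lambda\ge0$, $f,g:\mathbb{Z}^2\to\mathbb{R}$, let $\mathcal W:(\mathbb{Z}^2)^h\to(0,\infty)$ be any weight and $p,q\in(1,\infty)$ with $\frac1p+\frac1q=1$. Then for every $r\in\mathbb{N}$, $$\Xi(r)\le\Big(\max_{I\ne*}\big\|\widehat{\mathsf q}^{|f|,I}_L\tfrac1{\mathcal W}\big\|_{\ell^p}\Big)\Big(\max_{J\ne*}\big\|\mathcal W\,\overline{\mathsf q}^{|g|,J}_L\big\|_{\ell^q}\Big)\,\Xi^{\mathrm{bulk}}(r),$$ where $$\Xi^{\mathrm{bulk}}(r):=\sum_{\substack{I_1,\dots,I_r\vdash\{1,\dots,h\}\ \text{full support},\\ I_i\ne I_{i-1},\ I_i\ne*}}\Big\{\prod_{i=1}^r|\mathbb{E}[\xi^{I_i}_\beta]|\Big\}\Big(\max_{I,J\ne*,\,I\ne J}\big\|\mathcal W\widehat{\mathsf Q}^{I,J}_L\tfrac1{\mathcal W}\big\|_{\ell^q\to\ell^q}\Big)^{r-1}\Big(\max_{I\ne*}\big\|\mathcal W|\widehat{\mathsf U}|^I_{L,\lambda,\beta}\tfrac1{\mathcal W}\big\|_{\ell^q\to\ell^q}\Big)^r.$$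
   Context: Same setting as follows. $S$ simple random walk on $\mathbb{Z}^2$, $q_n(x):=\mathrm{P}(S_n=x\mid S_0=0)$, $q^f_n(x):=\sum_zq_n(x-z)f(z)$. $\omega$ i.i.d. independent of $S$ with mean $0$, variance $1$, $\lambda(\beta):=\log\mathbb{E}e^{\beta\omega}<\infty$; $\xi_\beta:=e^{\beta\omega-\lambda(\beta)}-1$. Partitions $I\vdash\{1,\dots,h\}$, $*$ = all singletons; $\mathbf x\sim I$: $x^a=x^b$ for $a,b$ in a common block, $x^a\ne x^b$ for $a,b$ in distinct blocks of size $\ge2$; full support: each $a$ lies in a block of size $\ge2$ of some $I_i$; $\mathbb{E}[\xi^J_\beta]:=\prod_{i:|J^i|\ge2}\mathbb{E}[\xi^{|J^i|}_\beta]$ for $J\ne*$. $\mathsf Q^{I,J}_n(\mathbf z,\mathbf x):=\mathbf 1_{\{\mathbf z\sim I,\mathbf x\sim J\}}\prod_iq_n(x^i-z^i)$, $\mathsf q^{f,J}_n(\mathbf x):=\mathbf 1_{\{\mathbf x\sim J\}}\prod_iq^f_n(x^i)$, $\widehat{\mathsf Q}^{I,J}_L:=\sum_{n=1}^L\mathsf Q^{I,J}_n$, $\widehat{\mathsf q}^{f,I}_L:=\sum_{n=1}^L\mathsf q^{f,I}_n$, $\overline{\mathsf q}^{g,J}_L(\mathbf z):=\max_{1\le n\le L}\mathsf q^{g,J}_n(\mathbf z)$; $|\mathsf U|^J_{m,\beta}(\mathbf z,\mathbf x):=\sum_{k\ge1}|\mathbb{E}\xi^J_\beta|^k\sum_{0=n_0<\dots<n_k=m}\sum_{\mathbf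 y_1..\mathbf y_{k-1}}\prod_{i}\mathsf Q^{J,J}_{n_i-n_{i-1}}(\mathbf y_{i-1},\mathbf y_i)$ ($\mathbf y_0=\mathbf z$, $\mathbf y_k=\mathbf x$), $|\widehat{\mathsf U}|^J_{L,\lambda,\beta}(\mathbf z,\mathbf x):=\mathbf 1_{\{\mathbf z=\mathbf x\sim J\}}+\sum_{m=1}^Le^{-\lambda m}|\mathsf U|^J_{m,\beta}(\mathbf z,\mathbf x)$. $\Xi(r):=\sum_{I_1..I_r\ \text{full support},\ I_i\ne I_{i-1},I_i\ne*}\{\prod_i|\mathbb{E}\xi^{I_i}_\beta|\}\sum_{\mathbf z_i,\mathbf z_i'}\widehat{\mathsf q}^{|f|,I_1}_L(\mathbf z_1)|\widehat{\mathsf U}|^{I_1}_{L,\lambda,\beta}(\mathbf z_1,\mathbf z_1')\prod_{i=2}^r\widehat{\mathsf Q}^{I_{i-1},I_i}_L(\mathbf z'_{i-1},\mathbf z_i)|\widehat{\mathsf U}|^{I_i}_{L,\lambda,\beta}(\mathbf z_i,\mathbf z_i')\,\overline{\mathsf q}^{|g|,I_r}_L(\mathbf z_r')$. Norms: $\|F\|_{\ell^p}:=(\sum|F|^p)^{1/p}$ on $(\mathbb{Z}^2)^h$; a kernel $\mathsf A(\mathbf z,\mathbf x)$ acts by $(\mathsf Ag)(\mathbf z)=\sum_{\mathbf x}\mathsf A(\mathbf z,\mathbf x)g(\mathbf x)$, $\|\mathsf A\|_{\ell^q\to\ell^q}$ is its operator norm; $(\mathcal W\mathsf A\tfrac1{\mathcal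 W})(\mathbf z,\mathbf x):=\mathcal W(\mathbf z)\mathsf A(\mathbf z,\mathbf x)/\mathcal W(\mathbf x)$, and $\widehat{\mathsf q}\tfrac1{\mathcal W}$, $\mathcal W\overline{\mathsf q}$ are pointwise products. *)

From HB Require Import structures.
From mathcomp Require Import all_boot all_order all_algebra.
From mathcomp Require Import all_classical all_reals all_analysis.
Set Implicit Arguments.
Unset Strict Implicit.
Unset Printing Implicit Defensive.
Import Order.TTheory GRing.Theory Num.Theory.
Local Open Scope ring_scope.

Definition Z2 := (int * int)%type.
Definition sub2 (x z : Z2) : Z2 := (x.1 - z.1, x.2 - z.2).
Definition Xh (h : nat) := {ffun 'I_h -> Z2}.
Definition Xh0 (h : nat) : Xh h := [ffun => (0, 0)].

Definition step (e : 'I_4) : Z2 :=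
  match val e with
  | 0 => (1, 0) | 1 => (-1, 0) | 2 => (0, 1) | _ => (0, -1)
  end.

(* q_n(x) = P(S_n = x | S_0 = 0): S_n is the sum of n i.i.d. uniform steps *)
Definition qrw (R : realType) (n : nat) (x : Z2) : R :=
  (#|[set s : {ffun 'I_n -> 'I_4} |
       (\sum_(i < n) (step (s i)).1, \sum_(i < n) (step (s i)).2) == x]|)%:R
  / (4%:R ^+ n).

Definition qf (R : realType) (f : Z2 -> R) (n : nat) (x : Z2) : \bar R :=
  \esum_(z in [set: Z2]) (qrw R n (sub2 x z) * `|f z|)%:E.

Definition is_part (h : nat) (I : {set {set 'I_h}}) : bool :=
  finset.partition I [set: 'I_h].
Definition star (h : nat) : {set {set 'I_h}} := [set [set a] | a : 'I_h].

Definition sim (h : nat) (x : Xh h) (I : {set {set 'I_h}}) : bool :=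
  [forall B in I, forall a in B, forall b in B, x a == x b] &&
  [forall B in I, forall C in I,
     ((B != C) && (1 < #|B|)%N && (1 < #|C|)%N) ==>
     [forall a in B, forall b in C, x a != x b]].

Definition qJ (R : realType) (h : nat) (f : Z2 -> R) (J : {set {set 'I_h}})
  (n : nat) (x : Xh h) : \bar R :=
  if sim x J then (\prod_(a < h) qf f n (x a))%E else 0%E.

Definition QQ (R : realType) (h : nat) (I J : {set {set 'I_h}}) (n : nat)
  (z x : Xh h) : \bar R :=
  if sim z I && sim x J then (\prod_(a < h) qrw R n (sub2 (x a) (z a)))%:E
  else 0%E.

Definition Qhat (R : realType) (h : nat) (I J : {set {set 'I_h}}) (L : nat)
  (z x : Xh h) : \bar R :=
  (\sum_(1 <= n < L.+1) QQ R I J n z x)%E.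

Definition qhat (R : realType) (h : nat) (f : Z2 -> R) (I : {set {set 'I_h}})
  (L : nat) (x : Xh h) : \bar R :=
  (\sum_(1 <= n < L.+1) qJ f I n x)%E.

Definition qbar (R : realType) (h : nat) (g : Z2 -> R) (J : {set {set 'I_h}})
  (L : nat) (x : Xh h) : \bar R :=
  \big[maxe/0%E]_(1 <= n < L.+1) qJ g J n x.

(* disorder: law P of omega; lambda(beta) = log E e^{beta omega};
   E[xi_beta^k] with xi_beta = e^{beta omega - lambda(beta)} - 1 *)
Definition lambda (R : realType) (P : probability R R) (beta : R) : R :=
  ln (fine (\int[P]_x (expR (beta * x))%:E)%E).

Definition xi_mom (R : realType) (P : probability R R) (beta : R) (k : nat)
  : \bar R :=
  (\int[P]_x ((expR (beta * x - lambda P beta) - 1) ^+ k)%:E)%E.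

Definition Exi (R : realType) (P : probability R R) (beta : R) (h : nat)
  (J : {set {set 'I_h}}) : \bar R :=
  `| \prod_(B in J | (1 < #|B|)%N) xi_mom P beta #|B| |%E.

Definition nv (m k : nat) (t : k.+1.-tuple 'I_m.+1) (j : nat) : nat :=
  val (nth ord0 t j).
Definition chain (m k : nat) (t : k.+1.-tuple 'I_m.+1) : bool :=
  [&& nv t 0 == 0%N, nv t k == m & [forall i : 'I_k, (nv t i < nv t i.+1)%N]].

(* |U|^J_{m,beta}(z, x), with c = |E xi^J_beta| *)
Definition Uabs (R : realType) (h : nat) (c : \bar R) (J : {set {set 'I_h}})
  (m : nat) (z x : Xh h) : \bar R :=
  (\esum_(k in [set k : nat | (1 <= k)%N])
     c ^+ k *
     \sum_(t : k.+1.-tuple 'I_m.+1 | chain t)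
       \esum_(y in [set y : k.+1.-tuple (Xh h) |
                      nth (Xh0 h) y 0 = z /\ nth (Xh0 h) y k = x])
         \prod_(i < k) QQ R J J (nv t i.+1 - nv t i)
                          (nth (Xh0 h) y i) (nth (Xh0 h) y i.+1))%E.

Definition Uhat (R : realType) (h : nat) (c : \bar R) (lam : R)
  (J : {set {set 'I_h}}) (L : nat) (z x : Xh h) : \bar R :=
  ((if (z == x) && sim x J then 1 else 0) +
   \sum_(1 <= m < L.+1) (expR (- lam * m%:R))%:E * Uabs c J m z x)%E.

Definition lpnorm (R : realType) (T : choiceType) (p : R) (F : T -> \bar R)
  : \bar R :=
  ((\esum_(x in [set: T]) (`|F x| `^ p)) `^ p^-1)%E.

Definition kact (R : realType) (T : choiceType) (A : T -> T -> \bar R)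
  (g : T -> R) : T -> \bar R :=
  fun z => (\esum_(x in [set: T]) A z x * (g x)%:E)%E.

Definition opnorm (R : realType) (T : choiceType) (q : R)
  (A : T -> T -> \bar R) : \bar R :=
  ereal_sup [set lpnorm q (kact A g) | g in
     [set g : T -> R | (forall x, 0 <= g x) /\ (lpnorm q (fun x => (g x)%:E) <= 1)%E]].

Definition wconj (R : realType) (T : choiceType) (W : T -> R)
  (A : T -> T -> \bar R) : T -> T -> \bar R :=
  fun z x => ((W z)%:E * A z x * ((W x)^-1)%:E)%E.

(* admissible sequences I_1, ..., I_r (stored as I_0..I_{r-1}) *)
Definition Iseq (h r : nat) (Is : r.-tuple {set {set 'I_h}}) (i : nat) :=
  nth finset.set0 Is i.
Definition admissible (h r : nat) (Is : r.-tuple {set {set 'I_h}}) : bool :=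
  [&& [forall i : 'I_r, is_part (tnth Is i) && (tnth Is i != star h)],
      [forall i : 'I_r, (0 < i)%N ==> (Iseq Is i != Iseq Is i.-1)] &
      [forall a : 'I_h, [exists i : 'I_r, (1 < #|finset.pblock (tnth Is i) a|)%N]]].

Definition Xi (R : realType) (P : probability R R) (beta lam : R) (h : nat)
  (f g : Z2 -> R) (L r : nat) : \bar R :=
  (\sum_(Is : r.-tuple {set {set 'I_h}} | admissible Is)
    (\prod_(i < r) Exi P beta (tnth Is i)) *
    \esum_(zz in [set: r.-tuple (Xh h * Xh h)])
      (let I := Iseq Is in
       let z i := (nth (Xh0 h, Xh0 h) zz i).1 in
       let z' i := (nth (Xh0 h, Xh0 h) zz i).2 in
       let U J := Uhat (Exi P beta J) lam J L in
       qhat f (I 0%N) L (z 0%N) * U (I 0%N) (z 0%N) (z' 0%N) *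
       (\prod_(1 <= i < r)
          (Qhat R (I i.-1) (I i) L (z' i.-1) (z i) * U (I i) (z i) (z' i))) *
       qbar g (I r.-1) L (z' r.-1)))%E.

Definition Xibulk (R : realType) (P : probability R R) (beta lam : R)
  (h : nat) (W : Xh h -> R) (q : R) (L r : nat) : \bar R :=
  let maxQ := \big[maxe/0%E]_(IJ : {set {set 'I_h}} * {set {set 'I_h}} |
                   [&& is_part IJ.1, IJ.1 != star h, is_part IJ.2,
                       IJ.2 != star h & IJ.1 != IJ.2])
                 opnorm q (wconj W (Qhat R IJ.1 IJ.2 L)) in
  let maxU := \big[maxe/0%E]_(I : {set {set 'I_h}} | is_part I && (I != star h))
                 opnorm q (wconj W (Uhat (Exi P beta I) lam I L)) in
  (\sum_(Is : r.-tuple {set {set 'I_h}} | admissible Is)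
     (\prod_(i < r) Exi P beta (tnth Is i)) * maxQ ^+ r.-1 * maxU ^+ r)%E.

From HB Require Import structures.
From mathcomp Require Import all_boot all_order all_algebra.
From mathcomp Require Import all_classical all_reals all_analysis.
Import Order.TTheory GRing.Theory Num.Theory.
Local Open Scope ring_scope.

(* For a fixed admissible sequence I_1, ..., I_r, the sum over the chain
   z_1, z'_1, ..., z_r, z'_r is an iterated kernel action
     sum_z qhat(z) (U_1 Q_2 U_2 ... Q_r U_r qbar)(z).
   Writing qhat(z) = (qhat(z) / W(z)) W(z) and applying Hoelder separates
   ||qhat / W||_p from ||W (U_1 Q_2 ... U_r qbar)||_q; the latter is peeled
   kernel by kernel with ||W (A v)||_q <= ||W A W^-1||_{q->q} ||W v||_q,
   leaving ||W qbar||_q. Bounding each kernel by the maximum over partitions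
   and summing over the sequences gives Xi^bulk(r). *)

Set Implicit Arguments.
Unset Strict Implicit.
Unset Printing Implicit Defensive.

Local Open Scope classical_set_scope.
Local Open Scope ereal_scope.

Section NonnegativeSums.
Context {R : realType} {T : choiceType}.
Implicit Types (S : set T) (a : T -> \bar R).

Lemma esum_ge_term S a i : S i -> (forall x, 0 <= a x) -> a i <= \esum_(x in S) a x.
Proof.
move=> Si a0; apply: esum_ge; exists [set i]; last by rewrite fsbig_set1.
by split; [exact: finite_set1 | move=> y ->].
Qed.

Lemma esumZl S c a : 0 <= c -> (forall x, 0 <= a x) ->
  \esum_(i in S) (c * a i) = c * \esum_(i in S) a i.
Proof.
move=> c0 a0.
have fsumsZ : [set \sum_(x \in A) (c * a x) | A in fsets S] =
              [set c * y | y in [set \sum_(x \in A) a x | A in fsets S]].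
  apply/seteqP; split => y /=.
    by move=> [A FA <-]; exists (\sum_(x \in A) a x); [exists A | rewrite ge0_mule_fsumr].
  by move=> [_ [A FA <-] <-]; exists A => //; rewrite ge0_mule_fsumr.
case: c c0 fsumsZ => [r| |//] c0 fsumsZ.
  rewrite /esum fsumsZ ereal_supZl //.
  by apply/set0P; exists (\sum_(x \in set0) a x); exists set0 => //; exact: fsets_set0.
have [sum0|sumn0] := eqVneq (\esum_(i in S) a i) 0.
  rewrite sum0 mule0; apply: esum1 => i Si.
  suff -> : a i = 0 by rewrite mule0.
  by apply/le_anti; rewrite a0 andbT -sum0 esum_ge_term.
have : 0 < \esum_(i in S) a i by rewrite lt0e sumn0 esum_ge0.
move=> /ereal_sup_gt [_ [A [finA AS] <-]] /fsume_gt0 [i Ai ai0].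
rewrite gt0_mulye ?lt0e ?sumn0 ?esum_ge0 //; apply/eqP; rewrite eq_le leey /=.
apply: le_trans (esum_ge_term (AS _ Ai) _); last by move=> x; rewrite mule_ge0.
by rewrite gt0_mulye.
Qed.

Lemma esumZr S c a : 0 <= c -> (forall x, 0 <= a x) ->
  \esum_(i in S) (a i * c) = (\esum_(i in S) a i) * c.
Proof. by move=> c0 a0; rewrite muleC -esumZl //; apply: eq_esum => i _; exact: muleC. Qed.

Lemma esum_pair (U V : choiceType) (a : U -> V -> \bar R) : (forall x y, 0 <= a x y) ->
  \esum_(u in [set: U * V]) a u.1 u.2 = \esum_(x in [set: U]) \esum_(y in [set: V]) a x y.
Proof.
by move=> a0; rewrite esum_esum //; congr esum; apply/seteqP; split => // -[].
Qed.

End NonnegativeSums.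

Lemma poweRK {R : realType} (x : \bar R) (r : R) : (0 < r)%R -> 0 <= x ->
  (x `^ r) `^ r^-1 = x.
Proof. by move=> r0 x0; rewrite -poweRrM mulfV ?gt_eqF // poweRe1. Qed.

Lemma poweRKV {R : realType} (x : \bar R) (r : R) : (0 < r)%R -> 0 <= x ->
  (x `^ r^-1) `^ r = x.
Proof. by move=> r0 x0; rewrite -poweRrM mulVf ?gt_eqF // poweRe1. Qed.

Lemma ge0_ler_poweR {R : realType} (x y : \bar R) (r : R) : (0 <= r)%R -> 0 <= x -> x <= y ->
  x `^ r <= y `^ r.
Proof.
by move=> r0 x0 xy; apply: gt0_ler_poweR; rewrite // ?in_itv /= ?x0 ?(le_trans x0 xy) ?leey.
Qed.

Section LpNorm.
Context {R : realType} {T : choiceType} (q : R).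
Hypothesis q_gt0 : (0 < q)%R.
Implicit Types (F G : T -> \bar R).

Lemma lpnorm_ge0 F : 0 <= lpnorm q F.
Proof. exact: poweR_ge0. Qed.

Lemma lpnorm_ge_term F z : (forall x, 0 <= F x) -> F z <= lpnorm q F.
Proof.
move=> F0; rewrite -[F z](@poweRK _ _ q) // /lpnorm.
apply: ge0_ler_poweR; [by rewrite invr_ge0 ltW | exact: poweR_ge0 |].
rewrite -(gee0_abs (F0 z)); apply: (esum_ge_term (a := fun x => `|F x| `^ q)) => //.
by move=> x; exact: poweR_ge0.
Qed.

Lemma lpnorm_eq0 F z : (forall x, 0 <= F x) -> lpnorm q F = 0 -> F z = 0.
Proof. by move=> F0 nF; apply/le_anti; rewrite F0 andbT -nF lpnorm_ge_term. Qed.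

Lemma lpnorm_fin_num F z : (forall x, 0 <= F x) -> lpnorm q F < +oo -> F z \is a fin_num.
Proof. by move=> F0 nF; rewrite ge0_fin_numE // (le_lt_trans (lpnorm_ge_term z F0)). Qed.

Lemma lpnormZ c F : 0 <= c -> (forall x, 0 <= F x) ->
  lpnorm q (fun x => c * F x) = c * lpnorm q F.
Proof.
move=> c0 F0; rewrite /lpnorm.
under eq_esum do rewrite abseM (gee0_abs c0) poweRM ?abse_ge0 //.
rewrite esumZl ?poweR_ge0 // => [|x]; last exact: poweR_ge0.
rewrite poweRM ?poweR_ge0 ?poweRK //.
by apply: esum_ge0 => x _; exact: poweR_ge0.
Qed.

Lemma lpnorm0 : lpnorm q (fun _ : T => 0) = 0.
Proof.
rewrite /lpnorm esum1 ?poweR0r ?invr_neq0 ?gt_eqF // => x _.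
by rewrite abse0 poweR0r // gt_eqF.
Qed.

Lemma lpnorm_eq0_fun F : (forall x, F x = 0) -> lpnorm q F = 0.
Proof. by move=> F0; rewrite (_ : F = fun=> 0) ?lpnorm0 //; apply: funext. Qed.

Lemma lpnorm_poweR F : lpnorm q F `^ q = \esum_(x in [set: T]) `|F x| `^ q.
Proof. by rewrite poweRKV //; apply: esum_ge0 => x _; exact: poweR_ge0. Qed.

End LpNorm.

Section Hoelder.
Context {R : realType} {T : choiceType} (p q : R).
Hypotheses (p_gt0 : (0 < p)%R) (q_gt0 : (0 < q)%R) (pq_conj : (p^-1 + q^-1 = 1)%R).
Implicit Types (F G : T -> \bar R).

Lemma hoelder_esum_normed F G : (forall x, 0 <= F x) -> (forall x, 0 <= G x) ->
  lpnorm p F = 1 -> lpnorm q G = 1 -> \esum_(x in [set: T]) (F x * G x) <= 1.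
Proof.
move=> F0 G0 nF nG.
have Ffin x : F x \is a fin_num by rewrite (lpnorm_fin_num p_gt0) // nF ltry.
have Gfin x : G x \is a fin_num by rewrite (lpnorm_fin_num q_gt0) // nG ltry.
have young x : F x * G x <= `|F x| `^ p * (p^-1)%:E + `|G x| `^ q * (q^-1)%:E.
  rewrite -(fineK (Ffin x)) -(fineK (Gfin x)) /= -!EFinM -EFinD lee_fin.
  have [Fx0 Gx0] : (0 <= fine (F x))%R /\ (0 <= fine (G x))%R by rewrite !fine_ge0.
  by rewrite !ger0_norm //; exact: conjugate_powR.
have pV0 : 0 <= (p^-1)%:E by rewrite lee_fin invr_ge0 ltW.
have qV0 : 0 <= (q^-1)%:E by rewrite lee_fin invr_ge0 ltW.
have pw0 (H : T -> \bar R) r x : 0 <= `|H x| `^ r by exact: poweR_ge0.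
apply: le_trans (le_esum (fun x _ => young x)) _.
rewrite esumD => [|x _|x _]; rewrite ?mule_ge0 //.
by rewrite !esumZr // -!lpnorm_poweR // nF nG !poweR1r !mul1e -EFinD pq_conj.
Qed.

Lemma hoelder_esum F G : (forall x, 0 <= F x) -> (forall x, 0 <= G x) ->
  \esum_(x in [set: T]) (F x * G x) <= lpnorm p F * lpnorm q G.
Proof.
move=> F0 G0.
have [nF0|nF0] := eqVneq (lpnorm p F) 0.
  by rewrite nF0 mul0e esum1 // => x _; rewrite (lpnorm_eq0 p_gt0 x F0 nF0) mul0e.
have [nG0|nG0] := eqVneq (lpnorm q G) 0.
  by rewrite nG0 mule0 esum1 // => x _; rewrite (lpnorm_eq0 q_gt0 x G0 nG0) mule0.
have nF_gt0 : 0 < lpnorm p F by rewrite lt0e nF0 lpnorm_ge0.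
have nG_gt0 : 0 < lpnorm q G by rewrite lt0e nG0 lpnorm_ge0.
have [->|nFy] := eqVneq (lpnorm p F) +oo; first by rewrite gt0_mulye ?leey.
have [->|nGy] := eqVneq (lpnorm q G) +oo; first by rewrite gt0_muley ?leey.
have /fineK nFE : lpnorm p F \is a fin_num by rewrite ge0_fin_numE ?lpnorm_ge0 ?ltey.
have /fineK nGE : lpnorm q G \is a fin_num by rewrite ge0_fin_numE ?lpnorm_ge0 ?ltey.
move: nF_gt0 nG_gt0; rewrite -nFE -nGE; set a := fine _; set b := fine _.
rewrite !lte_fin => a0 b0.
have aV0 : 0 <= (a^-1)%:E by rewrite lee_fin invr_ge0 ltW.
have bV0 : 0 <= (b^-1)%:E by rewrite lee_fin invr_ge0 ltW.
have normed := @hoelder_esum_normed (fun x => (a^-1)%:E * F x) (fun x => (b^-1)%:E * G x).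
rewrite !lpnormZ // -nFE -nGE -!EFinM !mulVf ?gt_eqF // in normed.
have -> : \esum_(x in [set: T]) (F x * G x) =
    (a * b)%:E * \esum_(x in [set: T]) ((a^-1)%:E * F x * ((b^-1)%:E * G x)).
  rewrite -esumZl ?lee_fin ?mulr_ge0 ?ltW // => [|x]; last by rewrite !mule_ge0.
  apply: eq_esum => x _.
  by rewrite muleACA -EFinM (muleA (a * b)%:E) -EFinM mulrACA !mulfV ?gt_eqF // mulr1 mul1e.
have ab0 : 0 <= (a * b)%:E by rewrite lee_fin mulr_ge0 ?ltW.
rewrite -EFinM -[X in _ <= X]mule1; apply: (lee_wpmul2l ab0).
by apply: normed => // x; rewrite mule_ge0.
Qed.

End Hoelder.

Definition kapp {R : realType} {T : choiceType} (A : T -> T -> \bar R) (u : T -> \bar R)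
  : T -> \bar R := fun z => \esum_(x in [set: T]) A z x * u x.

Section KernelOperators.
Context {R : realType} {T : choiceType} (q : R).
Hypothesis q_gt0 : (0 < q)%R.
Implicit Types (A : T -> T -> \bar R) (u : T -> \bar R).

Lemma kapp_ge0 A u z : (forall z x, 0 <= A z x) -> (forall x, 0 <= u x) -> 0 <= kapp A u z.
Proof. by move=> A0 u0; apply: esum_ge0 => x _; rewrite mule_ge0. Qed.

Lemma lpnorm_kapp_eq0 A u : (forall z x, A z x * u x = 0) -> lpnorm q (kapp A u) = 0.
Proof. by move=> Au0; apply: lpnorm_eq0_fun => // z; apply: esum1 => x _. Qed.

Lemma lpnorm_kact_le_opnorm A (g : T -> R) : (forall x, (0 <= g x)%R) ->
  lpnorm q (fun x => (g x)%:E) <= 1 -> lpnorm q (kact A g) <= opnorm q A.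
Proof. by move=> g0 g1; apply: ereal_sup_ubound; exists g. Qed.

Lemma opnorm_ge0 A : 0 <= opnorm q A.
Proof.
rewrite -(lpnorm_kapp_eq0 (A := A) (u := fun=> 0)) => [|z x]; last exact: mule0.
by apply: lpnorm_kact_le_opnorm => //; rewrite lpnorm0.
Qed.

Lemma opnorm_eq0 A z x : (forall z x, 0 <= A z x) -> opnorm q A = 0 -> A z x = 0.
Proof.
move=> A0 nA; apply/le_anti; rewrite A0 andbT -nA.
pose g y : R := (if y == x then 1 else 0)%R.
have g0 y : (0 <= g y)%R by rewrite /g; case: ifP.
have g1 : lpnorm q (fun y => (g y)%:E) <= 1.
  rewrite /lpnorm (_ : (fun y => _) = fun y => if y \in [set x] then 1 else 0).
    by rewrite -esum_mkcond esum_set1 // poweR1r.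
  apply: funext => y; rewrite /g in_set1.
  by case: eqP => _; rewrite ?abse1 ?poweR1r // abse0 poweR0r // gt_eqF.
apply: le_trans (lpnorm_kact_le_opnorm A g0 g1).
apply: le_trans (lpnorm_ge_term q_gt0 z _) => [|y]; last exact: kapp_ge0.
apply: le_trans (esum_ge_term (a := fun y => A z y * (g y)%:E) (i := x) _ _) => //.
  by rewrite /g eqxx mule1.
by move=> y; rewrite mule_ge0 // lee_fin.
Qed.

Lemma lpnorm_kapp_le A u : (forall z x, 0 <= A z x) -> (forall x, 0 <= u x) ->
  lpnorm q (kapp A u) <= opnorm q A * lpnorm q u.
Proof.
move=> A0 u0.
have RHS0 : 0 <= opnorm q A * lpnorm q u by rewrite mule_ge0 ?opnorm_ge0 ?lpnorm_ge0.
have [nu0|nu0] := eqVneq (lpnorm q u) 0.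
  by rewrite lpnorm_kapp_eq0 // => z x; rewrite (lpnorm_eq0 q_gt0 x u0 nu0) mule0.
have [nuy|nuy] := eqVneq (lpnorm q u) +oo.
  have [nA0|nA0] := eqVneq (opnorm q A) 0.
    by rewrite lpnorm_kapp_eq0 // => z x; rewrite (opnorm_eq0 z x A0 nA0) mul0e.
  by rewrite nuy gt0_muley ?leey // lt0e nA0 opnorm_ge0.
have /fineK nuE : lpnorm q u \is a fin_num by rewrite ge0_fin_numE ?lpnorm_ge0 ?ltey.
have ufin x : u x \is a fin_num by rewrite (lpnorm_fin_num q_gt0) // ltey.
move: nu0; rewrite -nuE; set n := fine _ => nu0.
have n_gt0 : (0 < n)%R by rewrite -lte_fin lt0e nu0 nuE lpnorm_ge0.
have n0 : 0 <= n%:E by rewrite lee_fin ltW.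
pose g x := (n^-1 * fine (u x))%R.
have g0 x : (0 <= g x)%R by rewrite mulr_ge0 ?fine_ge0 // invr_ge0 ltW.
have uE x : u x = n%:E * (g x)%:E.
  by rewrite -EFinM mulrA mulfV ?gt_eqF // mul1r fineK.
have -> : kapp A u = fun z => n%:E * kact A g z.
  apply: funext => z; rewrite /kact -esumZl // => [|x]; last by rewrite mule_ge0 ?lee_fin.
  by apply: eq_esum => x _; rewrite uE muleCA.
rewrite lpnormZ // => [|z]; last exact: kapp_ge0.
rewrite muleC; apply: lee_wpmul2r n0 _ _ _; apply: lpnorm_kact_le_opnorm => //.
rewrite (_ : (fun x => _) = fun x => (n^-1)%:E * u x); last first.
  by apply: funext => x; rewrite uE muleA -EFinM mulVf ?gt_eqF // mul1r.
rewrite lpnormZ //; last by rewrite lee_fin invr_ge0 ltW.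
by rewrite -nuE -EFinM mulVf ?gt_eqF.
Qed.

Lemma lpnorm_wkapp_le (W : T -> R) A u : (forall x, (0 < W x)%R) ->
  (forall z x, 0 <= A z x) -> (forall x, 0 <= u x) ->
  lpnorm q (fun z => (W z)%:E * kapp A u z) <=
  opnorm q (wconj W A) * lpnorm q (fun x => (W x)%:E * u x).
Proof.
move=> W0 A0 u0.
have W_ge0 x : 0 <= (W x)%:E by rewrite lee_fin ltW.
have -> : (fun z => (W z)%:E * kapp A u z) = kapp (wconj W A) (fun x => (W x)%:E * u x).
  apply: funext => z; rewrite -esumZl // => [|x]; last by rewrite mule_ge0.
  apply: eq_esum => x _; rewrite /wconj -!muleA; congr (_ * (_ * _)).
  by rewrite muleA -EFinM mulVf ?gt_eqF // mul1e.
apply: lpnorm_kapp_le => [z x|x]; last by rewrite mule_ge0.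
by rewrite !mule_ge0 // lee_fin ?invr_ge0 ltW.
Qed.

End KernelOperators.

Section Chains.
Context {R : realType} {X : choiceType}.
Implicit Types (K : nat -> X -> X -> \bar R) (F G : X -> \bar R).

Fixpoint kiter K G n : X -> \bar R :=
  if n is n'.+1 then kapp (K 1%N) (kiter (fun i => K i.+1) G n') else G.

Lemma chain_esum (x0 : X) n F K G :
  (forall x, 0 <= F x) -> (forall i z y, 0 <= K i z y) -> (forall x, 0 <= G x) ->
  \esum_(t in [set: n.+1.-tuple X])
     (F (nth x0 t 0) * (\prod_(1 <= i < n.+1) K i (nth x0 t i.-1) (nth x0 t i)) *
      G (nth x0 t n))
  = \esum_(x in [set: X]) (F x * kiter K G n x).
Proof.
elim: n F K => [|n IH] F K F0 K0 G0.
  rewrite (reindex_esum [set: X] _ (fun x => [tuple x])); last first.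
    split=> [x _ //|x y _ _ /(congr1 val) [] //|t _].
    exists (thead t) => //; apply: val_inj.
    by case: t => -[|a []] //= _; rewrite /thead (tnth_nth x0).
  by apply: eq_esum => x _ /=; rewrite big_geq // mule1.
rewrite (reindex_esum [set: X * n.+1.-tuple X] _ (fun p => [tuple of p.1 :: p.2])); last first.
  split=> [p _ //|[x t] [y s] _ _ /(congr1 val) /= [-> /val_inj ->] //|t _].
  exists (thead t, behead_tuple t) => //; apply: val_inj.
  by case: t => -[|a s] //= _; rewrite /thead (tnth_nth x0).
pose tcons x (t : n.+1.-tuple X) := [tuple of x :: t].
rewrite (esum_pair (a := fun x t =>
    F (nth x0 (tcons x t) 0) *
    (\prod_(1 <= i < n.+2) K i (nth x0 (tcons x t) i.-1) (nth x0 (tcons x t) i)) *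
    G (nth x0 (tcons x t) n.+1))) => [|x t]; last first.
  by rewrite !mule_ge0 //; apply: prode_ge0 => i _.
apply: eq_esum => x _ /=.
rewrite /kapp -(IH (K 1%N x) (fun i => K i.+1)) // -esumZl // => [|t]; last first.
  by rewrite !mule_ge0 //; apply: prode_ge0 => i _.
apply: eq_esum => t _; rewrite big_nat_recl //= -!muleA; do 3 congr (_ * _).
by apply: eq_big_nat => -[|i].
Qed.

End Chains.

Section AlternatingChains.
Context {R : realType} {T : choiceType}.
Implicit Types (Q U : nat -> T -> T -> \bar R) (F G : T -> \bar R).

Fixpoint kiter2 Q U G n : T -> \bar R :=
  if n is n'.+1 then
    kapp (Q 1%N) (kapp (U 1%N) (kiter2 (fun i => Q i.+1) (fun i => U i.+1) G n'))
  else G.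

Lemma kiter2_ge0 Q U G n x : (forall i z y, 0 <= Q i z y) -> (forall i z y, 0 <= U i z y) ->
  (forall x, 0 <= G x) -> 0 <= kiter2 Q U G n x.
Proof.
elim: n Q U x => [|n IH] Q U x Q0 U0 G0 //=.
by apply: kapp_ge0 => // y; apply: kapp_ge0 => // z; exact: IH.
Qed.

Lemma kiter_pair Q U G n (y : T * T) :
  (forall i z y, 0 <= Q i z y) -> (forall i z y, 0 <= U i z y) -> (forall x, 0 <= G x) ->
  kiter (fun i (y y' : T * T) => Q i y.2 y'.1 * U i y'.1 y'.2) (fun y => G y.2) n y =
  kiter2 Q U G n y.2.
Proof.
elim: n Q U y => [|n IH] Q U y Q0 U0 G0 //=.
have V0 z : 0 <= kiter2 (fun i => Q i.+1) (fun i => U i.+1) G n z by exact: kiter2_ge0.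
rewrite /kapp.
under eq_esum => y' _ do rewrite (IH _ _ y' (fun i => Q0 i.+1) (fun i => U0 i.+1) G0).
rewrite (esum_pair (a := fun z z' =>
  Q 1%N y.2 z * U 1%N z z' * kiter2 (fun i => Q i.+1) (fun i => U i.+1) G n z')) => [|z z'].
  apply: eq_esum => z _; rewrite -esumZl // => [|z']; last by rewrite mule_ge0.
  by apply: eq_esum => z' _; rewrite muleA.
by rewrite !mule_ge0.
Qed.

Lemma chain_esum_pair (x0 : T * T) n F Q U G :
  (forall x, 0 <= F x) -> (forall i z y, 0 <= Q i z y) -> (forall i z y, 0 <= U i z y) ->
  (forall x, 0 <= G x) ->
  \esum_(t in [set: n.+1.-tuple (T * T)])
    (F (nth x0 t 0).1 * U 0%N (nth x0 t 0).1 (nth x0 t 0).2 *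
     (\prod_(1 <= i < n.+1)
        (Q i (nth x0 t i.-1).2 (nth x0 t i).1 * U i (nth x0 t i).1 (nth x0 t i).2)) *
     G (nth x0 t n).2)
  = \esum_(z in [set: T]) (F z * kapp (U 0%N) (kiter2 Q U G n) z).
Proof.
move=> F0 Q0 U0 G0; set V := kiter2 Q U G n.
have V0 x : 0 <= V x by exact: kiter2_ge0.
rewrite (chain_esum x0 n (F := fun y => F y.1 * U 0%N y.1 y.2)
  (K := fun i (y y' : T * T) => Q i y.2 y'.1 * U i y'.1 y'.2) (G := fun y => G y.2));
  [|by move=> y; rewrite mule_ge0|by move=> i y y'; rewrite mule_ge0|by []].
under eq_esum => y _ do rewrite kiter_pair // -/V.
rewrite (esum_pair (a := fun z z' => F z * U 0%N z z' * V z')) => [|z z']; last first.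
  by rewrite !mule_ge0.
apply: eq_esum => z _; rewrite -esumZl // => [|z']; last by rewrite mule_ge0.
by apply: eq_esum => z' _; rewrite muleA.
Qed.

End AlternatingChains.

Section WeightedChainBound.
Context {R : realType} {T : choiceType} (p q : R) (W : T -> R).
Hypotheses (p_gt0 : (0 < p)%R) (q_gt0 : (0 < q)%R) (pq_conj : (p^-1 + q^-1 = 1)%R).
Hypothesis W_gt0 : forall x, (0 < W x)%R.
Implicit Types (Q U : nat -> T -> T -> \bar R) (F G : T -> \bar R).

Lemma lpnorm_wkiter2_le Q U G n (mQ mU : \bar R) :
  (forall i z y, 0 <= Q i z y) -> (forall i z y, 0 <= U i z y) -> (forall x, 0 <= G x) ->
  (forall i, (0 < i <= n)%N -> opnorm q (wconj W (Q i)) <= mQ) ->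
  (forall i, (0 < i <= n)%N -> opnorm q (wconj W (U i)) <= mU) ->
  lpnorm q (fun x => (W x)%:E * kiter2 Q U G n x) <=
  mQ ^+ n * mU ^+ n * lpnorm q (fun x => (W x)%:E * G x).
Proof.
elim: n Q U => [|n IH] Q U Q0 U0 G0 mQ_ge mU_ge; first by rewrite !mul1e.
have V0 x : 0 <= kiter2 (fun i => Q i.+1) (fun i => U i.+1) G n x by exact: kiter2_ge0.
have mQ1 := mQ_ge 1%N isT; have mU1 := mU_ge 1%N isT.
have mQ0 : 0 <= mQ by apply: le_trans mQ1; exact: opnorm_ge0.
have IHn := IH _ _ (fun i => Q0 i.+1) (fun i => U0 i.+1) G0
  (fun i hi => mQ_ge i.+1 (andP hi).2) (fun i hi => mU_ge i.+1 (andP hi).2).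
apply: le_trans (lpnorm_wkapp_le q_gt0 W_gt0 (Q0 1%N) _) _ => [x|].
  exact: kapp_ge0.
apply: le_trans (lee_pmul (opnorm_ge0 q_gt0 _) (lpnorm_ge0 _ _) mQ1
  (lpnorm_wkapp_le q_gt0 W_gt0 (U0 1%N) V0)) _.
apply: le_trans (lee_pmul mQ0 (mule_ge0 (opnorm_ge0 q_gt0 _) (lpnorm_ge0 _ _)) (lexx mQ)
  (lee_pmul (opnorm_ge0 q_gt0 _) (lpnorm_ge0 _ _) mU1 IHn)) _.
by rewrite !expeS -!muleA [mQ ^+ n * (mU * _)]muleCA.
Qed.

Lemma chain_esum_le (x0 : T * T) n F G Q U (mF mG mQ mU : \bar R) :
  (forall x, 0 <= F x) -> (forall x, 0 <= G x) ->
  (forall i z y, 0 <= Q i z y) -> (forall i z y, 0 <= U i z y) ->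
  lpnorm p (fun x => F x * ((W x)^-1)%:E) <= mF ->
  lpnorm q (fun x => (W x)%:E * G x) <= mG ->
  (forall i, (0 < i <= n)%N -> opnorm q (wconj W (Q i)) <= mQ) ->
  (forall i, (i <= n)%N -> opnorm q (wconj W (U i)) <= mU) ->
  \esum_(t in [set: n.+1.-tuple (T * T)])
    (F (nth x0 t 0).1 * U 0%N (nth x0 t 0).1 (nth x0 t 0).2 *
     (\prod_(1 <= i < n.+1)
        (Q i (nth x0 t i.-1).2 (nth x0 t i).1 * U i (nth x0 t i).1 (nth x0 t i).2)) *
     G (nth x0 t n).2)
  <= mF * mG * (mQ ^+ n * mU ^+ n.+1).
Proof.
move=> F0 G0 Q0 U0 nF nG mQ_ge mU_ge.
have mQn0 : 0 <= mQ ^+ n.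
  have [->|n_gt0] := posnP n; first by rewrite expe0.
  apply/expe_ge0/(le_trans (opnorm_ge0 q_gt0 _) (mQ_ge n _)).
  by rewrite n_gt0 leqnn.
set V := kiter2 Q U G n.
have V0 x : 0 <= V x by exact: kiter2_ge0.
have W0 x : 0 <= (W x)%:E by rewrite lee_fin ltW.
have WV0 x : 0 <= ((W x)^-1)%:E by rewrite lee_fin invr_ge0 ltW.
have mU0 : 0 <= mU by apply: le_trans (mU_ge 0%N isT); exact: opnorm_ge0.
rewrite chain_esum_pair // -/V.
have -> : \esum_(z in [set: T]) (F z * kapp (U 0%N) V z) =
    \esum_(z in [set: T]) ((F z * ((W z)^-1)%:E) * ((W z)%:E * kapp (U 0%N) V z)).
  apply: eq_esum => z _.
  by rewrite -muleA (muleA ((W z)^-1)%:E) -EFinM mulVf ?gt_eqF // mul1e.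
apply: le_trans (hoelder_esum p_gt0 q_gt0 pq_conj _ _) _ => [x|x|].
- by rewrite mule_ge0.
- by rewrite mule_ge0 // kapp_ge0.
have nWV : lpnorm q (fun z => (W z)%:E * kapp (U 0%N) V z) <=
    mU * (mQ ^+ n * mU ^+ n * mG).
  apply: le_trans (lpnorm_wkapp_le q_gt0 W_gt0 (U0 0%N) V0) _.
  apply: lee_pmul (opnorm_ge0 q_gt0 _) (lpnorm_ge0 _ _) (mU_ge 0%N isT) _.
  apply: le_trans (lpnorm_wkiter2_le Q0 U0 G0 mQ_ge
    (fun i hi => mU_ge i (andP hi).2)) _.
  by apply: lee_pmul => //; [exact: mule_ge0 mQn0 (expe_ge0 _ mU0) | exact: lpnorm_ge0].
apply: le_trans (lee_pmul (lpnorm_ge0 _ _) (lpnorm_ge0 _ _) nF nWV) _.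
suff -> : mF * mG * (mQ ^+ n * mU ^+ n.+1) = mF * (mU * (mQ ^+ n * mU ^+ n * mG)) by [].
by rewrite expeS -muleA; congr (mF * _); rewrite muleC muleCA -muleA.
Qed.

End WeightedChainBound.

Section Nonnegativity.
Context {R : realType} {h : nat}.
Implicit Types (I J : {set {set 'I_h}}) (f : Z2 -> R).

Lemma bigmaxe_ge0 (K : finType) (P : pred K) (F : K -> \bar R) :
  0 <= \big[maxe/0]_(k | P k) F k.
Proof. by rewrite bigmax_idr le_max lexx orbT. Qed.

Lemma qrw_ge0 n x : (0 <= qrw R n x)%R.
Proof. by rewrite divr_ge0 // exprn_ge0. Qed.

Lemma QQ_ge0 I J n z x : 0 <= QQ R I J n z x.
Proof. by rewrite /QQ; case: ifP => // _; rewrite lee_fin prodr_ge0 // => a _; exact: qrw_ge0. Qed.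

Lemma Qhat_ge0 I J L z x : 0 <= Qhat R I J L z x.
Proof. by apply: sume_ge0 => n _; exact: QQ_ge0. Qed.

Lemma qJ_ge0 f J n x : 0 <= qJ f J n x.
Proof.
rewrite /qJ; case: ifP => // _; apply: prode_ge0 => a _.
by apply: esum_ge0 => z _; rewrite lee_fin mulr_ge0 // qrw_ge0.
Qed.

Lemma qhat_ge0 f J L x : 0 <= qhat f J L x.
Proof. by apply: sume_ge0 => n _; exact: qJ_ge0. Qed.

Lemma qbar_ge0 f J L x : 0 <= qbar f J L x.
Proof.
by rewrite /qbar; elim/big_ind: _ => // [a b a0 b0|n _]; [rewrite le_max a0 | exact: qJ_ge0].
Qed.

Lemma Uhat_ge0 (c : \bar R) lam J L z x : 0 <= c -> 0 <= Uhat c lam J L z x.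
Proof.
move=> c0; rewrite adde_ge0 //; first by case: ifP.
apply: sume_ge0 => m _; rewrite mule_ge0 ?lee_fin ?expR_ge0 //.
apply: esum_ge0 => k _; rewrite mule_ge0 ?expe_ge0 //.
apply: sume_ge0 => t _; apply: esum_ge0 => y _; apply: prode_ge0 => i _; exact: QQ_ge0.
Qed.

End Nonnegativity.

Section Admissible.
Context {h r : nat} (Is : r.-tuple {set {set 'I_h}}).
Hypothesis Is_adm : admissible Is.

Lemma admissible_part i : (i < r)%N -> is_part (Iseq Is i) && (Iseq Is i != star h).
Proof.
case/and3P: Is_adm => /forallP parts _ _ ir.
by have := parts (Ordinal ir); rewrite /Iseq (tnth_nth finset.set0).
Qed.

Lemma admissible_neq i : (0 < i < r)%N -> Iseq Is i != Iseq Is i.-1.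
Proof.
case/and3P: Is_adm => _ /forallP neq _ /andP[i_gt0 ir].
by have := neq (Ordinal ir); rewrite /= i_gt0.
Qed.

End Admissible.

Section XiSummand.
Context {R : realType} {h : nat} (P : probability R R) (beta lam : R) (f g : Z2 -> R).
Context (L : nat) (W : Xh h -> R) (p q : R) (mF mG mQ mU : \bar R).
Hypotheses (p_gt0 : (0 < p)%R) (q_gt0 : (0 < q)%R) (pq_conj : (p^-1 + q^-1 = 1)%R).
Hypothesis W_gt0 : forall x, (0 < W x)%R.
Let nonstar (I : {set {set 'I_h}}) := is_part I && (I != star h).
Hypothesis mF_ge : forall I, nonstar I -> lpnorm p (fun x => qhat f I L x * ((W x)^-1)%:E) <= mF.
Hypothesis mG_ge : forall J, nonstar J -> lpnorm q (fun x => (W x)%:E * qbar g J L x) <= mG.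
Hypothesis mQ_ge : forall I J, nonstar I -> nonstar J -> I != J ->
  opnorm q (wconj W (Qhat R I J L)) <= mQ.
Hypothesis mU_ge : forall I, nonstar I -> opnorm q (wconj W (Uhat (Exi P beta I) lam I L)) <= mU.

Lemma Xi_summand_le n (Is : n.+1.-tuple {set {set 'I_h}}) : admissible Is ->
  \esum_(zz in [set: n.+1.-tuple (Xh h * Xh h)])
    (qhat f (Iseq Is 0) L (nth (Xh0 h, Xh0 h) zz 0).1 *
     Uhat (Exi P beta (Iseq Is 0)) lam (Iseq Is 0) L
       (nth (Xh0 h, Xh0 h) zz 0).1 (nth (Xh0 h, Xh0 h) zz 0).2 *
     (\prod_(1 <= i < n.+1)
        (Qhat R (Iseq Is i.-1) (Iseq Is i) L
           (nth (Xh0 h, Xh0 h) zz i.-1).2 (nth (Xh0 h, Xh0 h) zz i).1 *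
         Uhat (Exi P beta (Iseq Is i)) lam (Iseq Is i) L
           (nth (Xh0 h, Xh0 h) zz i).1 (nth (Xh0 h, Xh0 h) zz i).2)) *
     qbar g (Iseq Is n) L (nth (Xh0 h, Xh0 h) zz n).2)
  <= mF * mG * (mQ ^+ n * mU ^+ n.+1).
Proof.
move=> adm.
have part i : (i <= n)%N -> nonstar (Iseq Is i).
  by move=> i_le; apply: (admissible_part adm); rewrite ltnS.
apply: (chain_esum_le p_gt0 q_gt0 pq_conj W_gt0 (Xh0 h, Xh0 h)
  (Q := fun i => Qhat R (Iseq Is i.-1) (Iseq Is i) L)
  (U := fun i => Uhat (Exi P beta (Iseq Is i)) lam (Iseq Is i) L)).
- exact: qhat_ge0.
- exact: qbar_ge0.
- by move=> *; exact: Qhat_ge0.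
- by move=> *; rewrite Uhat_ge0 ?abse_ge0.
- exact/mF_ge/part.
- exact/mG_ge/part.
- move=> i /andP[i_gt0 i_le]; apply: mQ_ge; rewrite ?part ?(leq_trans (leq_pred i)) //.
  by rewrite eq_sym (admissible_neq adm) ?i_gt0.
- by move=> i /part; exact: mU_ge.
Qed.

End XiSummand.

Local Close Scope ereal_scope.
Local Close Scope classical_set_scope.

Theorem theorem4p10 (R : realType) (P : probability R R)
  (hP_int : P.-integrable [set: R] EFin)
  (hP_mean : (\int[P]_x x%:E = 0)%E)
  (hP_var : (\int[P]_x (x ^+ 2)%:E = 1)%E)
  (h L : nat) (beta lam : R) (f g : Z2 -> R) (W : Xh h -> R) (p q : R) (r : nat)
  (hh : (2 <= h)%N) (hbeta : 0 < beta) (hlam : 0 <= lam)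
  (hP_exp : (\int[P]_x (expR (beta * x))%:E < +oo)%E)
  (hW : forall x, 0 < W x)
  (hp : 1 < p) (hq : 1 < q) (hpq : p^-1 + q^-1 = 1)
  (hr : (1 <= r)%N) :
  (Xi P beta lam h f g L r <=
     (\big[maxe/0%E]_(I : {set {set 'I_h}} | is_part I && (I != star h))
        lpnorm p (fun x => qhat f I L x * ((W x)^-1)%:E)) *
     (\big[maxe/0%E]_(J : {set {set 'I_h}} | is_part J && (J != star h))
        lpnorm q (fun x => (W x)%:E * qbar g J L x)) *
     Xibulk P beta lam W q L r)%E.
Proof.
have p_gt0 : 0 < p by apply: lt_trans hp.
have q_gt0 : 0 < q by apply: lt_trans hq.
case: r hr => // n _; rewrite /Xi /Xibulk.
set mF := (\big[maxe/0]_(I | _) lpnorm p _)%E.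
set mG := (\big[maxe/0]_(J | _) lpnorm q _)%E.
set mQ := (\big[maxe/0]_(IJ | _) opnorm q (wconj W (Qhat R IJ.1 IJ.2 L)))%E.
set mU := (\big[maxe/0]_(I | _) opnorm q _)%E.
have prodExi_ge0 (Is : n.+1.-tuple _) : (0 <= \prod_(i < n.+1) Exi P beta (tnth Is i))%E.
  by apply: prode_ge0 => i _; exact: abse_ge0.
rewrite ge0_sume_distrr => [|Is _]; last by rewrite !mule_ge0 ?expe_ge0 ?bigmaxe_ge0.
apply: lee_sum => Is adm; rewrite -[(_ * _ * mU ^+ _)%E]muleA muleCA.
apply: lee_wpmul2l => //; apply: (Xi_summand_le p_gt0 q_gt0 hpq hW) => //.
- by move=> I nsI; apply: le_bigmax_cond.
- by move=> J nsJ; apply: le_bigmax_cond.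
- move=> I J /andP[pI sI] /andP[pJ sJ] IJ.
  by apply: (@le_bigmax_cond _ _ _ _ (I, J)); rewrite /= pI sI pJ sJ IJ.
- by move=> I nsI; apply: (@le_bigmax_cond _ _ _ _ I).
Qed.
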